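(* Consider (CVOP) and its associated convex projection (Pv). (1) Let (CVOP) be bounded. If $\bar X\subseteq\mathcal{X}$ is a Hausdorff-type finite $\epsilon$-infimizer of (CVOP), then $\bar S:=\{(x,\Gamma(x)):x\in\bar X\}$ is a finite $\epsilon$-solution of (Pv). (2) Let (Pv) be self-bounded with $(\operatorname{cl}Y_a)_\infty=\operatorname{cl}C$. If $\bar S\subseteq S_a$ is a finite $\epsilon$-solution of (Pv), then $\bar X:=\operatorname{proj}_x[\bar S]$ is a Hausdorff-type finite $\xi$-infimizer of (CVOP) for every $\xi>\epsilon$.
   Context: (CVOP): $\min\Gamma(x)$ w.r.t. $\le_C$ s.t. $x\in\mathcal{X}$, with $C\subseteq\mathbb{R}^m$ a non-trivial pointed solid convex cone, $\mathcal{X}\subseteq\mathbb{R}^n$ convex, $\Gamma$ $C$-convex; upper image $\mathcal{G}=\operatorname{cl}(\Gamma[\mathcal{X}]+C)$; bounded means $\mathcal{G}\subseteq\{q\}+C$ for some $q$. Fix a $p$-norm $\|\cdot\|$ with closed balls $B_\epsilon$. Hausdorff distance $d_H(A_1,A_2)=\max\{\sup_{a_1\in A_1}\inf_{a_2\in A_2}\|a_1-a_2\|,\sup_{a_2\in A_2}\inf_{a_1\in A_1}\|a_1-a_2\|\}$. A nonempty finite $\bar X\subseteq\mathcal{X}$ is a Hausdorff-type finite $\epsilon$-infimizer of bounded (CVOP) if $d_H(\mathcal{G},\operatorname{conv}\Gamma[\bar X]+C)\le\epsilon$. (Pv): compute $Y_a=\operatorname{proj}_y[S_a]$ with $S_a=\{(x,y):x\in\mathcal{X},y\in\Gamma(x)+C\}$.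 Recession cone $A_\infty=\{y:x+\lambda y\in A\ \forall x\in A,\lambda\ge0\}$. (Pv) is self-bounded if $Y_a\ne\mathbb{R}^m$ and $Y_a\subseteq\operatorname{conv}\{y^{(1)},\dots,y^{(k)}\}+(\operatorname{cl}Y_a)_\infty$ for finitely many points; a nonempty finite $\bar S\subseteq S_a$ is a finite $\epsilon$-solution of self-bounded (Pv) if $Y_a\subseteq\operatorname{conv}\operatorname{proj}_y[\bar S]+(\operatorname{cl}Y_a)_\infty+B_\epsilon$. $\operatorname{proj}_x(x,y)=x$. *)

From HB Require Import structures.
From mathcomp Require Import all_boot all_order all_algebra.
From mathcomp Require Import all_classical all_reals all_analysis.
Set Implicit Arguments. Unset Strict Implicit. Unset Printing Implicit Defensive.
Import Order.TTheory GRing.Theory Num.Theory.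
Import numFieldNormedType.Exports.
Local Open Scope classical_set_scope.
Local Open Scope ring_scope.

Section CVOP.
Variable R : realType.

Definition pnorm (p : \bar R) (k : nat) (x : 'rV[R]_k) : R :=
  match p with
  | EFin q => (\sum_(i < k) `|x 0 i| `^ q) `^ q^-1
  | _ => \big[Num.max/0]_(i < k) `|x 0 i|
  end.

Definition cball (p : \bar R) (k : nat) (eps : R) : set 'rV[R]_k :=
  [set y | pnorm p y <= eps].

Definition msum (k : nat) (A B : set 'rV[R]_k) : set 'rV[R]_k :=
  [set z | exists a b, A a /\ B b /\ z = a + b].

Definition conv (k : nat) (A : set 'rV[R]_k) : set 'rV[R]_k :=
  [set y | exists (N : nat) (w : 'I_N -> R) (v : 'I_N -> 'rV[R]_k),
      (forall i, 0 <= w i) /\ \sum_(i < N) w i = 1 /\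
      (forall i, A (v i)) /\ y = \sum_(i < N) w i *: v i].

Definition is_convex (k : nat) (A : set 'rV[R]_k) : Prop :=
  forall x y, A x -> A y -> forall l : R, 0 <= l <= 1 ->
    A (l *: x + (1 - l) *: y).

Definition convex_cone (k : nat) (C : set 'rV[R]_k) : Prop :=
  C !=set0 /\
  (forall x, C x -> forall l : R, 0 <= l -> C (l *: x)) /\
  (forall x y, C x -> C y -> C (x + y)).

Definition pointed (k : nat) (C : set 'rV[R]_k) : Prop :=
  forall x, C x -> C (- x) -> x = 0.

Definition solid (k : nat) (C : set 'rV[R]_k) : Prop := interior C !=set0.

Definition nontrivial (k : nat) (C : set 'rV[R]_k) : Prop :=
  C <> [set 0] /\ C <> setT.

Definition leC (k : nat) (C : set 'rV[R]_k) (x y : 'rV[R]_k) : Prop := C (y - x).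

Definition C_convex (n m : nat) (C : set 'rV[R]_m) (X : set 'rV[R]_n)
  (G : 'rV[R]_n -> 'rV[R]_m) : Prop :=
  forall x y, X x -> X y -> forall l : R, 0 <= l <= 1 ->
    leC C (G (l *: x + (1 - l) *: y)) (l *: G x + (1 - l) *: G y).

Definition upper_image (n m : nat) (C : set 'rV[R]_m) (X : set 'rV[R]_n)
  (G : 'rV[R]_n -> 'rV[R]_m) : set 'rV[R]_m :=
  closure (msum (G @` X) C).

Definition bounded_CVOP (n m : nat) (C : set 'rV[R]_m) (X : set 'rV[R]_n)
  (G : 'rV[R]_n -> 'rV[R]_m) : Prop :=
  exists q, upper_image C X G `<=` msum [set q] C.

Definition hausdorff (p : \bar R) (k : nat) (A1 A2 : set 'rV[R]_k) : \bar R :=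
  Order.max
    (ereal_sup [set ereal_inf [set (pnorm p (a1 - a2))%:E | a2 in A2] | a1 in A1])
    (ereal_sup [set ereal_inf [set (pnorm p (a1 - a2))%:E | a1 in A1] | a2 in A2]).

Definition hausdorff_infimizer (p : \bar R) (n m : nat) (C : set 'rV[R]_m)
  (X : set 'rV[R]_n) (G : 'rV[R]_n -> 'rV[R]_m) (eps : R)
  (Xb : set 'rV[R]_n) : Prop :=
  Xb !=set0 /\ finite_set Xb /\ Xb `<=` X /\
  (hausdorff p (upper_image C X G) (msum (conv (G @` Xb)) C) <= eps%:E)%E.

Definition Sa (n m : nat) (C : set 'rV[R]_m) (X : set 'rV[R]_n)
  (G : 'rV[R]_n -> 'rV[R]_m) : set ('rV[R]_n * 'rV[R]_m) :=
  [set s | X s.1 /\ msum [set G s.1] C s.2].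

Definition Ya (n m : nat) (C : set 'rV[R]_m) (X : set 'rV[R]_n)
  (G : 'rV[R]_n -> 'rV[R]_m) : set 'rV[R]_m := snd @` Sa C X G.

Definition rec_cone (k : nat) (A : set 'rV[R]_k) : set 'rV[R]_k :=
  [set y | forall x, A x -> forall l : R, 0 <= l -> A (x + l *: y)].

Definition self_bounded (n m : nat) (C : set 'rV[R]_m) (X : set 'rV[R]_n)
  (G : 'rV[R]_n -> 'rV[R]_m) : Prop :=
  Ya C X G <> setT /\
  exists P : set 'rV[R]_m, finite_set P /\
    Ya C X G `<=` msum (conv P) (rec_cone (closure (Ya C X G))).

Definition finite_eps_solution (p : \bar R) (n m : nat) (C : set 'rV[R]_m)
  (X : set 'rV[R]_n) (G : 'rV[R]_n -> 'rV[R]_m) (eps : R)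
  (Sb : set ('rV[R]_n * 'rV[R]_m)) : Prop :=
  Sb !=set0 /\ finite_set Sb /\ Sb `<=` Sa C X G /\
  Ya C X G `<=`
    msum (msum (conv (snd @` Sb)) (rec_cone (closure (Ya C X G)))) (@cball p m eps).

End CVOP.

From Pilot Require Import Defs.
From HB Require Import structures.
From mathcomp Require Import all_boot all_order all_algebra.
From mathcomp Require Import all_classical all_reals all_analysis.
From mathcomp Require Import ring lra.
Import Order.TTheory GRing.Theory Num.Theory.
Import numFieldNormedType.Exports.
Local Open Scope classical_set_scope.
Local Open Scope ring_scope.

Set Implicit Arguments. Unset Strict Implicit. Unset Printing Implicit Defensive.

(* The bridge between the two problems is that the upper image of (CVOP) is
   cl Y_a with Y_a = Gamma[X] + C (upper_imageE), that Y_a is convex and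
   stable under adding C, and that cl C consists of recession directions of
   cl Y_a (closure_cone_rec).
   (1) Boundedness Y_a <= q + C gives self-boundedness with the single point q.
   A Hausdorff bound eps only puts each y in Y_a within eps + d of
   conv Gamma[Xb] + C for every d > 0; since the distance to a set is
   attained in its closure and the weights of a convex combination range over
   a compact simplex, y is exactly within eps of conv Gamma[Xb] + cl C
   (approx_attained).
   (2) The eps-solution writes every point of Y_a as a point of a bounded
   convex hull plus a point of cl C plus an eps-small vector
   (eps_solution_decomp); an interior point of the solid cone C absorbs the
   bounded part, whence boundedness (cone_absorbs), and convexity gives
   conv Gamma[proj_x Sb] + C <= Y_a, whence the Hausdorff bound xi > eps. *)

Section Minkowski.
Variable R : realType.
Implicit Types (q t A B S : R).

Lemma powR_convex_comb q t (a b : R) : 1 <= q -> 0 <= a -> 0 <= b ->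
  0 <= t -> t <= 1 ->
  (t * a + (1 - t) * b) `^ q <= t * a `^ q + (1 - t) * b `^ q.
Proof.
move=> q1 a0 b0 t0 t1.
have := @convex_powR R q q1 (Itv01 t0 t1) a b.
by rewrite !inE /= !in_itv /= !andbT => /(_ a0 b0); rewrite !convRE.
Qed.

Lemma powR_invr A q : 0 < A -> (A^-1) `^ q = (A `^ q)^-1.
Proof. by move=> A0; rewrite -powR_inv1 ?ltW // -powRrM mulN1r powRN. Qed.

Lemma powRVK S q : 0 < q -> 0 <= S -> (S `^ q^-1) `^ q = S.
Proof. by move=> q0 S0; rewrite -powRrM mulVf ?gt_eqF // powRr1. Qed.

Lemma powRKV S q : 0 < q -> 0 <= S -> (S `^ q) `^ q^-1 = S.
Proof. by move=> q0 S0; rewrite -powRrM mulfV ?gt_eqF // powRr1. Qed.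

(* The core of Minkowski's inequality: writing a + b as a convex combination
   of a / A and b / B, with A, B the q-norms of a and b, convexity of `^ q
   bounds the q-th power of the norm of a + b. *)
Lemma minkowski_core k q (a b : 'I_k -> R) A B : 1 <= q ->
  (forall i, 0 <= a i) -> (forall i, 0 <= b i) -> 0 < A -> 0 < B ->
  \sum_i a i `^ q = A `^ q -> \sum_i b i `^ q = B `^ q ->
  \sum_i (a i + b i) `^ q <= (A + B) `^ q.
Proof.
move=> q1 a0 b0 A0 B0 SA SB.
have s0 : 0 < A + B by rewrite addr_gt0.
pose t := A / (A + B).
have t0 : 0 <= t by rewrite divr_ge0 // ltW.
have t1 : t <= 1 by rewrite ler_pdivrMr // mul1r lerDl ltW.
have tB : 1 - t = B / (A + B).
  by apply: (mulIf (lt0r_neq0 s0)); rewrite mulrBl !divfK ?lt0r_neq0 // mul1r; lra.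
have aA i : 0 <= a i / A by rewrite divr_ge0 // ltW.
have bB i : 0 <= b i / B by rewrite divr_ge0 // ltW.
have step i : (a i + b i) `^ q <=
    (A + B) `^ q * (t * (a i `^ q / A `^ q) + (1 - t) * (b i `^ q / B `^ q)).
  have -> : a i + b i = (A + B) * (t * (a i / A) + (1 - t) * (b i / B)).
    by rewrite tB /t; field; rewrite !lt0r_neq0.
  rewrite powRM; last 2 first.
  - exact: ltW.
  - by apply: addr_ge0; apply: mulr_ge0; rewrite ?subr_ge0.
  rewrite ler_pM2l ?powR_gt0 //.
  apply: le_trans (powR_convex_comb q1 (aA i) (bB i) t0 t1) _.
  rewrite (powRM _ (a0 i)); last by rewrite invr_ge0; exact: ltW.
  rewrite (powRM _ (b0 i)); last by rewrite invr_ge0; exact: ltW.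
  by rewrite !powR_invr.
apply: le_trans (ler_sum _ (fun i _ => step i)) _.
rewrite -mulr_sumr big_split /= -!mulr_sumr -!mulr_suml SA SB.
by rewrite !mulfV ?gt_eqF ?powR_gt0 // !mulr1 subrKC mulr1.
Qed.

Lemma minkowski_sum k q (a b : 'I_k -> R) : 1 <= q ->
  (forall i, 0 <= a i) -> (forall i, 0 <= b i) ->
  (\sum_i (a i + b i) `^ q) `^ q^-1 <=
  (\sum_i a i `^ q) `^ q^-1 + (\sum_i b i `^ q) `^ q^-1.
Proof.
move=> q1 a0 b0; have q0 : 0 < q by rewrite (lt_le_trans _ q1).
have sum_ge0 (c : 'I_k -> R) : 0 <= \sum_i c i `^ q.
  by rewrite sumr_ge0 // => i _; exact: powR_ge0.
have sum_eq0 (c : 'I_k -> R) : (forall i, 0 <= c i) ->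
    (\sum_i c i `^ q) `^ q^-1 = 0 -> forall i, c i = 0.
  move=> c0 /eqP; rewrite powR_eq0 => /andP[/eqP + _] i.
  move/eqP; rewrite psumr_eq0 => [/allP/(_ i (mem_index_enum _))|j _]; last exact: powR_ge0.
  by move/eqP/powR_eq0_eq0.
set A := (\sum_i a i `^ q) `^ q^-1; set B := (\sum_i b i `^ q) `^ q^-1.
have [A0|A0] := eqVneq A 0.
  have ai := sum_eq0 a a0 A0; rewrite A0 add0r /B.
  suff -> : \sum_i (a i + b i) `^ q = \sum_i b i `^ q by [].
  by apply: eq_bigr => i _; rewrite ai add0r.
have [B0|B0] := eqVneq B 0.
  have bi := sum_eq0 b b0 B0; rewrite B0 addr0 /A.
  suff -> : \sum_i (a i + b i) `^ q = \sum_i a i `^ q by [].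
  by apply: eq_bigr => i _; rewrite bi addr0.
have Agt0 : 0 < A by rewrite lt_def A0 powR_ge0.
have Bgt0 : 0 < B by rewrite lt_def B0 powR_ge0.
have AB0 : 0 <= A + B := addr_ge0 (ltW Agt0) (ltW Bgt0).
apply: (@le_trans _ _ (((A + B) `^ q) `^ q^-1)); last by rewrite powRKV.
apply: ge0_ler_powR; rewrite ?nnegrE ?invr_ge0 ?powR_ge0 //; first exact: ltW.
by apply: minkowski_core => //; rewrite powRVK.
Qed.

End Minkowski.

Section PNorm.
Variables (R : realType) (p : \bar R) (k : nat).
Hypothesis p_ge1 : (1 <= p)%E.
Implicit Types x y : 'rV[R]_k.

Lemma pnorm_ge0 x : 0 <= pnorm p x.
Proof. by case: p p_ge1 => [q| |] //= _; [exact: powR_ge0 | exact: bigmax_ge_id]. Qed.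

Lemma pnorm_coord x i : `|x 0 i| <= pnorm p x.
Proof.
case: p p_ge1 => [q| |] //=; last by move=> _; apply: le_bigmax.
rewrite lee_fin => q1; have q0 : 0 < q by rewrite (lt_le_trans _ q1).
rewrite -[leLHS](@powRKV _ `|x 0 i| q) //.
apply: ge0_ler_powR; rewrite ?nnegrE ?invr_ge0 ?powR_ge0 //; first exact: ltW.
  by rewrite sumr_ge0 // => j _; exact: powR_ge0.
by rewrite (bigD1 i) //= lerDl sumr_ge0 // => j _; exact: powR_ge0.
Qed.

Lemma pnormD x y : pnorm p (x + y) <= pnorm p x + pnorm p y.
Proof.
have cx := pnorm_coord x; have cy := pnorm_coord y.
move: cx cy; case: p p_ge1 => [q| |] //=; last first.
  move=> _ cx cy; apply: bigmax_le => [|i _].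
    by apply: addr_ge0; exact: bigmax_ge_id.
  by rewrite mxE; apply: le_trans (ler_normD _ _) _; apply: lerD.
rewrite lee_fin => q1 _ _; have q0 : 0 < q by rewrite (lt_le_trans _ q1).
apply: le_trans (minkowski_sum q1 (fun i => normr_ge0 (x 0 i))
                                  (fun i => normr_ge0 (y 0 i))).
apply: ge0_ler_powR; rewrite ?nnegrE ?invr_ge0; first exact: ltW.
- by apply: sumr_ge0 => i _; exact: powR_ge0.
- by apply: sumr_ge0 => i _; exact: powR_ge0.
apply: ler_sum => i _; rewrite mxE.
apply: ge0_ler_powR; rewrite ?nnegrE ?normr_ge0 ?addr_ge0 //; first exact: ltW.
exact: ler_normD.
Qed.

Lemma pnormN x : pnorm p (- x) = pnorm p x.
Proof.
case: p => [q| |] /=; last 2 first.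
- by apply: eq_bigr => i _; rewrite mxE normrN.
- by apply: eq_bigr => i _; rewrite mxE normrN.
by congr (_ `^ _); apply: eq_bigr => i _; rewrite mxE normrN.
Qed.

Lemma pnormB_ge x y : pnorm p x - pnorm p y <= pnorm p (x - y).
Proof. by rewrite lerBlDr; apply: le_trans (pnormD _ _); rewrite subrK. Qed.

Lemma pnorm_le_coord x (M : R) : 0 <= M -> (forall i, `|x 0 i| <= M) ->
  pnorm p x <= k%:R * M.
Proof.
move=> M0 HM; case: p p_ge1 => [q| |] //=; last first.
  move=> _; case: k x HM => [|k'] x HM; first by rewrite big_ord0 mul0r.
  apply: bigmax_le => [|i _]; first by rewrite mulr_ge0.
  by apply: le_trans (HM i) _; rewrite ler_peMl // ler1n.
rewrite lee_fin => q1; have q0 : 0 < q by rewrite (lt_le_trans _ q1).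
apply: (@le_trans _ _ ((k%:R * M `^ q) `^ q^-1)).
  apply: ge0_ler_powR; rewrite ?nnegrE ?invr_ge0 ?mulr_ge0 ?powR_ge0 //.
  - exact: ltW.
  - by apply: sumr_ge0 => i _; exact: powR_ge0.
  have -> : k%:R * M `^ q = \sum_(i < k) M `^ q.
    by rewrite sumr_const card_ord mulr_natl.
  apply: ler_sum => i _.
  by apply: ge0_ler_powR; rewrite ?nnegrE ?normr_ge0 //; exact: ltW.
rewrite powRM ?ler0n ?powR_ge0 // powRKV //; apply: ler_wpM2r => //.
case: k => [|k']; first by rewrite powR0 ?invr_eq0 ?gt_eqF.
by apply: ler1_powR; rewrite ?ler1n ?invf_le1.
Qed.

Lemma pnorm0 : pnorm p (0 : 'rV[R]_k) = 0.
Proof.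
apply/eqP; rewrite eq_le pnorm_ge0 andbT -(mulr0 k%:R).
by apply: pnorm_le_coord => // i; rewrite mxE normr0.
Qed.

Lemma coord_le_norm x i : `|x 0 i| <= `|x|.
Proof.
rewrite [leRHS]/Num.Def.normr /= mx_normrE.
exact: le_trans (le_bigmax _ _ (0, i)).
Qed.

(* The p-norm and the sup norm are equivalent, which transfers the topology
   of the normed module 'rV[R]_k to p-norm estimates. *)
Lemma pnorm_le_norm x : pnorm p x <= k%:R * `|x|.
Proof. exact: pnorm_le_coord (coord_le_norm x). Qed.

Lemma norm_le_pnorm x : `|x| <= pnorm p x.
Proof.
rewrite [leLHS]/Num.Def.normr /= mx_normrE.
apply: bigmax_le => [|[i j] _ /=]; first exact: pnorm_ge0.
by rewrite (ord1 i); exact: pnorm_coord.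
Qed.

End PNorm.

Section MetricFacts.
Variables (R : realType) (k : nat).
Implicit Types (A : set 'rV[R]_k) (x y z : 'rV[R]_k).

Lemma ball_norm x (e : R) y : ball x e y <-> `|x - y| < e.
Proof. by rewrite -ball_normE. Qed.

Lemma closureP A z :
  closure A z <-> forall e, 0 < e -> exists a, A a /\ `|z - a| < e.
Proof.
split=> [clz e e0 | H B /nbhs_ballP [e /= e0 Be]].
  have [a [Aa za]] := clz _ (nbhsx_ballx z _ e0).
  by exists a; split => //; apply/ball_norm.
have [a [Aa za]] := H e e0; exists a; split => //.
by apply/Be/ball_norm.
Qed.

Lemma interiorP A x :
  interior A x -> exists2 e, 0 < e & forall y, `|x - y| < e -> A y.
Proof.
move=> /nbhs_ballP [e /= e0 Be]; exists e => // y xy.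
exact/Be/ball_norm.
Qed.

Lemma lipschitz_continuous (f : 'rV[R]_k -> R) (K : R) :
  (forall x y, f x - f y <= K * `|x - y|) -> continuous f.
Proof.
move=> Hf x; apply/(@cvgrPdist_lt _ _ _ (nbhs x) (nbhs_filter x)) => e e0.
have K1 : 0 < `|K| + 1 by rewrite ltr_wpDl.
have d0 : 0 < e / (`|K| + 1) by rewrite divr_gt0.
have close u v : `|u - v| < e / (`|K| + 1) -> f u - f v < e.
  move=> uv; apply: le_lt_trans (Hf u v) _.
  apply: le_lt_trans (ler_wpM2r (normr_ge0 _) (ler_norm K)) _.
  apply: le_lt_trans (ler_wpM2r (normr_ge0 _) (ler_wpDr ler01 (lexx `|K|))) _.
  by rewrite mulrC -ltr_pdivlMr.
near=> t.
have xt : `|x - t| < e / (`|K| + 1).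
  by apply/ball_norm; near: t; exact: nbhsx_ballx.
rewrite ltr_norml close // andbT ltrNl opprB close // distrC.
Unshelve. all: by end_near.
Qed.

Lemma closed_le_level (f : 'rV[R]_k -> R) (c : R) :
  continuous f -> closed [set x | f x <= c].
Proof. by move=> cf; exact: (continuous_closedP f).1 cf _ (@closed_le _ c). Qed.

Lemma closed_ge_level (f : 'rV[R]_k -> R) (c : R) :
  continuous f -> closed [set x | c <= f x].
Proof. by move=> cf; exact: (continuous_closedP f).1 cf _ (@closed_ge _ c). Qed.

Lemma bounded_setP A (M : R) : (forall x, A x -> `|x| <= M) -> bounded_set A.
Proof.
move=> HM; suff : \forall M' \near +oo, globally A [set x | `|x| <= M'] by [].
near=> M' => x Ax /=.
apply: le_trans (HM x Ax) _; near: M'; exact: nbhs_pinfty_ge (num_real M).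
Unshelve. all: by end_near.
Qed.

Lemma norm_le_coord x (M : R) : 0 <= M -> (forall i, `|x 0 i| <= M) -> `|x| <= M.
Proof.
move=> M0 H; rewrite [leLHS]/Num.Def.normr /= mx_normrE.
by apply: bigmax_le => // -[i j] _ /=; rewrite (ord1 i); exact: H.
Qed.

Lemma finite_norm_bound A : finite_set A ->
  exists2 M, 0 <= M & forall x, A x -> `|x| <= M.
Proof.
move=> /finite_seqP [s ->]; exists (\sum_(x <- s) `|x|) => [|x /=].
  exact: sumr_ge0.
elim: s => // h s IH; rewrite inE big_cons => /orP [/eqP -> | xs].
  by rewrite lerDl sumr_ge0.
by apply: le_trans (IH xs) _; rewrite lerDr.
Qed.

End MetricFacts.

Section ConvexCone.
Variables (R : realType) (k : nat) (C : set 'rV[R]_k).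
Hypothesis coneC : convex_cone C.

Lemma cone0 : C 0.
Proof. by case: coneC => [[c Cc] [HZ _]]; rewrite -(scale0r c); apply: HZ. Qed.

Lemma coneZ c l : C c -> 0 <= l -> C (l *: c).
Proof. by case: coneC => _ [HZ _] Cc l0; apply: HZ. Qed.

Lemma coneD a b : C a -> C b -> C (a + b).
Proof. by case: coneC => _ [_ HD]; apply: HD. Qed.

Lemma cone_sum N (w : 'I_N -> R) (c : 'I_N -> 'rV[R]_k) :
  (forall i, 0 <= w i) -> (forall i, C (c i)) -> C (\sum_i w i *: c i).
Proof.
move=> w0 Cc; elim/big_ind: _ => [|a b|i _]; first exact: cone0.
  exact: coneD.
exact: coneZ.
Qed.

End ConvexCone.

Section ConvexHull.
Variables (R : realType) (k : nat).
Implicit Types (A B P : set 'rV[R]_k).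

Lemma conv_mono A B : A `<=` B -> Defs.conv A `<=` Defs.conv B.
Proof.
move=> AB y [N [w [v [w0 [w1 [Av ->]]]]]].
by exists N, w, v; do 3!split => //; move=> i; apply: AB.
Qed.

Lemma conv_sub A : is_convex A -> Defs.conv A `<=` A.
Proof.
move=> cA y [N]; elim: N y => [|N IH] y [w [v [w0 [w1 [Av ->]]]]].
  by move: w1; rewrite big_ord0 => /eqP; rewrite eq_sym oner_eq0.
rewrite big_ord_recr /=; rewrite big_ord_recr /= in w1.
set l := \sum_(i < N) w (widen_ord (leqnSn N) i).
have l0 : 0 <= l by apply: sumr_ge0.
have wN : w ord_max = 1 - l by rewrite /l -w1; ring.
have [l00|lpos] := eqVneq l 0.
  have wi i : w (widen_ord (leqnSn N) i) = 0.
    apply/eqP; move: l00 => /eqP; rewrite psumr_eq0 // => /allP/(_ i).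
    by rewrite mem_index_enum => /(_ isT).
  rewrite big1 ?add0r; last by move=> i _; rewrite wi scale0r.
  by rewrite wN l00 subr0 scale1r.
have lgt : 0 < l by rewrite lt_def lpos l0.
have -> : \sum_(i < N) w (widen_ord (leqnSn N) i) *: v (widen_ord (leqnSn N) i) =
    l *: \sum_(i < N) (w (widen_ord (leqnSn N) i) / l) *: v (widen_ord (leqnSn N) i).
  rewrite scaler_sumr; apply: eq_bigr => i _; rewrite scalerA.
  by rewrite mulrCA mulfV ?mulr1.
rewrite wN; apply: cA; last by rewrite l0 /= -w1 lerDl.
- apply: IH; exists (fun i => w (widen_ord (leqnSn N) i) / l).
  exists (fun i => v (widen_ord (leqnSn N) i)); split.
    by move=> i; apply: divr_ge0.
  by split => //; rewrite -mulr_suml mulfV.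
- exact: Av.
Qed.

Lemma conv_norm_le P (M : R) a : (forall x, P x -> `|x| <= M) ->
  Defs.conv P a -> `|a| <= M.
Proof.
move=> HM [N [w [v [w0 [w1 [Pv ->]]]]]].
apply: le_trans (ler_norm_sum _ _ _) _.
apply: (@le_trans _ _ (\sum_i w i * M)); last by rewrite -mulr_suml w1 mul1r.
apply: ler_sum => i _; rewrite normrZ ger0_norm //.
by apply: ler_wpM2l => //; exact: HM.
Qed.

Definition simplex (N : nat) : set 'rV[R]_N :=
  [set w | (forall i, 0 <= w 0 i) /\ \sum_i w 0 i = 1].

Definition comb (N : nat) (v : 'I_N -> 'rV[R]_k) (w : 'rV[R]_N) : 'rV[R]_k :=
  \sum_i w 0 i *: v i.

Lemma comb_conv P N (v : 'I_N -> 'rV[R]_k) w :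
  (forall i, P (v i)) -> simplex w -> Defs.conv P (comb v w).
Proof. by move=> Pv [w0 w1]; exists N, (fun i => w 0 i), v. Qed.

Lemma compact_simplex N : compact (@simplex N).
Proof.
have sum_cont : continuous (fun w : 'rV[R]_N => \sum_i w 0 i).
  apply: (@lipschitz_continuous _ _ _ N%:R) => x x'.
  rewrite -sumrB; apply: le_trans (ler_norm _) _.
  apply: le_trans (ler_norm_sum _ _ _) _.
  have -> : N%:R * `|x - x'| = \sum_(i < N) `|x - x'|.
    by rewrite sumr_const card_ord mulr_natl.
  by apply: ler_sum => i _; have := coord_le_norm (x - x') i; rewrite !mxE.
have -> : @simplex N = \bigcap_(i in setT) [set w : 'rV[R]_N | 0 <= w 0 i] `&`
    ([set w | \sum_i w 0 i <= 1] `&` [set w | 1 <= \sum_i w 0 i]).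
  apply/seteqP; split => w /=.
    by move=> [w0 w1]; split => [i _|]; [exact: w0 | rewrite w1 lexx].
  by move=> [w0 [w1 w2]]; split => [i|]; [exact: w0 | apply/eqP; rewrite eq_le w1].
apply: bounded_closed_compact.
  apply: (@bounded_setP _ _ _ 1) => w [w0 [w1 _]]; apply: norm_le_coord => // i.
  rewrite ger0_norm; last exact: w0.
  by apply: le_trans w1; rewrite (bigD1 i) //= lerDl; apply: sumr_ge0 => j _; exact: w0.
apply: closedI; last by apply: closedI; [exact: closed_le_level | exact: closed_ge_level].
by apply: closed_bigI => i _; apply: closed_ge_level; exact: coord_continuous.
Qed.

Lemma sum_pick N (c : R) (i0 : 'I_N) (f : 'I_N -> 'rV[R]_k) :
  \sum_(j < N) (if i0 == j then c else 0) *: f j = c *: f i0.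
Proof.
rewrite (bigD1 i0) //= eqxx big1 ?addr0 // => j /negbTE.
by rewrite eq_sym => ->; rewrite scale0r.
Qed.

Lemma sum_pick1 N (c : R) (i0 : 'I_N) :
  \sum_(j < N) (if i0 == j then c else 0) = c.
Proof.
rewrite (bigD1 i0) //= eqxx big1 ?addr0 // => j /negbTE.
by rewrite eq_sym => ->.
Qed.

(* The convex hull of a finite set is parametrized by the simplex: enumerate
   the set as v and merge the weights of repeated points. *)
Lemma conv_finite_param P : finite_set P ->
  exists N (v : 'I_N -> 'rV[R]_k), (forall i, P (v i)) /\
    forall a, Defs.conv P a -> exists2 w, simplex w & a = comb v w.
Proof.
move=> /finite_seqP [s ->]; exists (size s), (fun i => nth 0 s i).
split=> [i /=|a [M [w [u [w0 [w1 [Pu ->]]]]]]]; first exact: mem_nth.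
have hidx i : (index (u i) s < size s)%N by rewrite index_mem; exact: Pu.
pose pos i := Ordinal (hidx i).
exists (\row_j \sum_(i < M) (if pos i == j then w i else 0)); first split.
- by move=> j; rewrite mxE; apply: sumr_ge0 => i _; case: ifP.
- under eq_bigr do rewrite mxE.
  by rewrite exchange_big /= -w1; apply: eq_bigr => i _; exact: sum_pick1.
rewrite /comb; under [RHS]eq_bigr do rewrite mxE scaler_suml.
rewrite exchange_big /=; apply: eq_bigr => i _.
by rewrite sum_pick /= nth_index //; exact: Pu.
Qed.

End ConvexHull.

Lemma comb_lipschitz (R : realType) (k N : nat) (v : 'I_N -> 'rV[R]_k)
    (w w' : 'rV[R]_N) :
  `|comb v w - comb v w'| <= (\sum_i `|v i|) * `|w - w'|.
Proof.
have -> : comb v w - comb v w' = \sum_i (w 0 i - w' 0 i) *: v i.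
  by rewrite /comb -sumrB; apply: eq_bigr => i _; rewrite scalerBl.
apply: le_trans (ler_norm_sum _ _ _) _; rewrite mulr_suml.
apply: ler_sum => i _; rewrite normrZ mulrC; apply: ler_wpM2l => //.
by have := coord_le_norm (w - w') i; rewrite !mxE.
Qed.

Section SetDistance.
Variables (R : realType) (m : nat) (p : \bar R) (C : set 'rV[R]_m).
Hypotheses (p_ge1 : (1 <= p)%E) (C_neq0 : C !=set0).
Implicit Types u v : 'rV[R]_m.

Definition set_dist v : R := inf [set pnorm p (v - c) | c in C].

Let dists_has_inf v : has_inf [set pnorm p (v - c) | c in C].
Proof.
split; first by case: C_neq0 => c Cc; exists (pnorm p (v - c)), c.
by exists 0 => _ [c _ <-]; exact: pnorm_ge0.
Qed.

Lemma set_dist_le v c : C c -> set_dist v <= pnorm p (v - c).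
Proof. by move=> Cc; apply: (ge_inf (dists_has_inf v).2); exists c. Qed.

Lemma set_dist_ge v z : (forall c, C c -> z <= pnorm p (v - c)) -> z <= set_dist v.
Proof. by move=> Hz; apply: lb_le_inf (dists_has_inf v).1 _ => _ [c Cc <-]; exact: Hz. Qed.

Lemma set_dist_approx v d : 0 < d ->
  exists2 c, C c & pnorm p (v - c) < set_dist v + d.
Proof. by move=> d0; have [_ [c Cc <-]] := inf_adherent d0 (dists_has_inf v); exists c. Qed.

Lemma set_dist_lipschitz u v : set_dist u - set_dist v <= pnorm p (u - v).
Proof.
rewrite lerBlDr addrC -lerBlDr; apply: set_dist_ge => c Cc.
rewrite lerBlDr; apply: le_trans (set_dist_le u Cc) _.
have -> : u - c = (v - c) + (u - v) by rewrite [RHS]addrC addrA subrK.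
exact: (pnormD p_ge1).
Qed.

(* In finite dimension the distance to C is attained in the closure of C:
   minimize r |-> pnorm (v - r) over the compact set of points of cl C
   that are at most set_dist v + 1 away from v. *)
Lemma set_dist_attained v : exists2 r, closure C r & pnorm p (v - r) <= set_dist v.
Proof.
pose g r := pnorm p (v - r).
have g_cont : continuous g.
  apply: (@lipschitz_continuous _ _ _ m%:R) => r r'.
  apply: le_trans (pnormB_ge p_ge1 _ _) _.
  have -> : v - r - (v - r') = - (r - r') by rewrite opprB addrC addrA subrK opprB.
  by rewrite pnormN; exact: pnorm_le_norm.
pose K := [set r | closure C r /\ g r <= set_dist v + 1].
have K_compact : compact K.
  apply: bounded_closed_compact; last first.
    by apply: closedI; [exact: closed_closure | exact: closed_le_level].
  apply: (@bounded_setP _ _ _ (`|v| + (set_dist v + 1))) => r [_ gr].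
  have -> : r = v - (v - r) by rewrite opprB addrC subrK.
  apply: le_trans (ler_normB _ _) _; rewrite lerD2l.
  exact: le_trans (norm_le_pnorm p_ge1 _) gr.
have [c1 Cc1 gc1] := set_dist_approx v ltr01.
have K_neq0 : K !=set0 by exists c1; split; [exact: subset_closure | exact: ltW].
have [r rK rmin] := EVT_min_rV K_neq0 K_compact (continuous_subspaceT g_cont).
move: rK; rewrite in_setE => -[clr gr]; exists r => //.
apply/ler_addgt0Pr => d d0.
have [d1|d1] := leP 1 d; first by apply: le_trans gr _; rewrite lerD2l.
have [c Cc gc] := set_dist_approx v d0.
have cK : K c by split; [exact: subset_closure | apply/ltW/(lt_trans gc); rewrite ltrD2l].
by apply: le_trans (rmin c _) (ltW gc); rewrite in_setE.
Qed.

(* If y is, for every d > 0, within eps + d of conv P + C with P finite, then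
   it is within eps of conv P + cl C: minimize the distance from y - a to C
   over a in conv P, parametrized by the compact simplex. *)
Lemma approx_attained (P : set 'rV[R]_m) (eps : R) y : finite_set P ->
  (forall d, 0 < d -> exists a c,
     Defs.conv P a /\ C c /\ pnorm p (y - (a + c)) < eps + d) ->
  exists a r, Defs.conv P a /\ closure C r /\ pnorm p (y - (a + r)) <= eps.
Proof.
move=> /conv_finite_param [N [v [Pv paramP]]] H.
pose F w := set_dist (y - comb v w).
have F_cont : continuous F.
  apply: (@lipschitz_continuous _ _ _ (m%:R * \sum_i `|v i|)) => w w'.
  apply: le_trans (set_dist_lipschitz _ _) _.
  have -> : y - comb v w - (y - comb v w') = comb v w' - comb v w.
    by rewrite opprB addrC addrA subrK.
  apply: le_trans (pnorm_le_norm p_ge1 _) _; rewrite -mulrA ler_wpM2l //.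
  by rewrite distrC; exact: comb_lipschitz.
have simplex_neq0 : @simplex R N !=set0.
  by have [a1 [_ [Pa1 _]]] := H 1 ltr01; have [w1 w1S _] := paramP a1 Pa1; exists w1.
have [ws wsS wsmin] :=
  EVT_min_rV simplex_neq0 (@compact_simplex R N) (continuous_subspaceT F_cont).
move: wsS; rewrite in_setE => wsS.
have F_ws : F ws <= eps.
  apply/ler_addgt0Pr => d d0.
  have [a [c [Pa [Cc ac]]]] := H d d0; have [w wS aE] := paramP a Pa.
  apply: le_trans (wsmin w _) _; first by rewrite in_setE.
  apply: le_trans (set_dist_le _ Cc) _.
  by rewrite -addrA -opprD -aE ltW.
have [r clr yr] := set_dist_attained (y - comb v ws).
exists (comb v ws), r; split; first exact: comb_conv.
by split => //; rewrite opprD addrA; exact: le_trans yr F_ws.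
Qed.

End SetDistance.

Section Hausdorff.
Variables (R : realType) (k : nat) (p : \bar R).
Implicit Types A : set 'rV[R]_k.

Lemma hausdorff_approx A1 A2 (e d : R) a1 :
  (hausdorff p A1 A2 <= e%:E)%E -> A1 a1 -> 0 < d ->
  exists2 a2, A2 a2 & pnorm p (a1 - a2) < e + d.
Proof.
rewrite /hausdorff ge_max => /andP [H1 _] A1a1 d0.
have : (ereal_inf [set (pnorm p (a1 - a2))%:E | a2 in A2] < (e + d)%:E)%E.
  apply: le_lt_trans (le_lt_trans H1 _); last by rewrite lte_fin ltrDl.
  by apply: ereal_sup_ubound; exists a1.
by move=> /ereal_inf_lt [_ [a2 A2a2 <-]]; rewrite lte_fin; exists a2.
Qed.

Lemma hausdorff_le A1 A2 (e : R) :
  (forall a1, A1 a1 -> exists2 a2, A2 a2 & pnorm p (a1 - a2) <= e) ->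
  (forall a2, A2 a2 -> exists2 a1, A1 a1 & pnorm p (a1 - a2) <= e) ->
  (hausdorff p A1 A2 <= e%:E)%E.
Proof.
move=> H1 H2; rewrite /hausdorff ge_max; apply/andP; split;
  apply: ge_ereal_sup => _ [a Aa <-]; apply: ge_ereal_inf.
- by have [a2 A2a2 h] := H1 a Aa; exists (pnorm p (a - a2))%:E => //; exists a2.
- by have [a1 A1a1 h] := H2 a Aa; exists (pnorm p (a1 - a))%:E => //; exists a1.
Qed.

End Hausdorff.

Lemma cone_absorbs (R : realType) (k : nat) (C : set 'rV[R]_k) c0 (rho M : R) z c :
  convex_cone C -> 0 < rho -> (forall y, `|c0 - y| < rho -> C y) -> 0 <= M ->
  C c -> `|z - c| <= M -> C (z + ((M + 1) / rho) *: c0).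
Proof.
move=> coneC rho0 ballC M0 Cc zc; set t := (M + 1) / rho.
have t0 : 0 < t by rewrite divr_gt0 // ltr_wpDl.
have -> : z + t *: c0 = t *: (c0 + t^-1 *: (z - c)) + c.
  by apply/rowP => j; rewrite !mxE; field; exact: lt0r_neq0.
apply: coneD => //; apply: coneZ (ltW t0) => //; apply: ballC.
rewrite opprD addrA subrr add0r normrN normrZ ger0_norm ?invr_ge0 ?(ltW t0) //.
apply: le_lt_trans (ler_wpM2l _ zc) _; first by rewrite invr_ge0 ltW.
have M1 : 0 < M + 1 by rewrite ltr_wpDl.
rewrite /t invf_div -mulrA -[ltRHS]mulr1 ltr_pM2l // mulrC ltr_pdivrMr //.
by rewrite mul1r ltrDl.
Qed.

Section ConvexProjection.
Variables (R : realType) (n m : nat).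
Variables (C : set 'rV[R]_m) (X : set 'rV[R]_n) (G : 'rV[R]_n -> 'rV[R]_m).
Hypothesis coneC : convex_cone C.
Hypotheses (X_convex : is_convex X) (G_convex : C_convex C X G).

Lemma YaP y : Ya C X G y <-> exists2 x, X x & C (y - G x).
Proof.
split=> [[s [Xs [a [b [/= -> [Cb ->]]]]] <-] | [x Xx Cy]].
  by exists s.1 => //; rewrite addrAC subrr add0r.
exists (x, y) => //; split => //.
by exists (G x), (y - G x); split => //; split => //=; rewrite addrC subrK.
Qed.

Lemma upper_imageE : upper_image C X G = closure (Ya C X G).
Proof.
rewrite /upper_image; congr closure; apply/seteqP; split => y.
  move=> [a [b [[x Xx <-] [Cb ->]]]]; apply/YaP; exists x => //.
  by rewrite addrAC subrr add0r.
move=> /YaP [x Xx Cy]; exists (G x), (y - G x); split; first by exists x.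
by split => //; rewrite addrC subrK.
Qed.

Lemma Ya_addC y c : Ya C X G y -> C c -> Ya C X G (y + c).
Proof.
move=> /YaP [x Xx Cy] Cc; apply/YaP; exists x => //.
by rewrite addrAC; apply: coneD.
Qed.

Lemma Ya_image x : X x -> Ya C X G (G x).
Proof. by move=> Xx; apply/YaP; exists x; rewrite // subrr; exact: cone0. Qed.

Lemma Ya_convex : is_convex (Ya C X G).
Proof.
move=> y1 y2 /YaP [x1 X1 C1] /YaP [x2 X2 C2] l /andP [l0 l1].
apply/YaP; exists (l *: x1 + (1 - l) *: x2); first by apply: X_convex; rewrite ?l0.
have -> : l *: y1 + (1 - l) *: y2 - G (l *: x1 + (1 - l) *: x2) =
   (l *: (y1 - G x1) + (1 - l) *: (y2 - G x2)) +
   ((l *: G x1 + (1 - l) *: G x2) - G (l *: x1 + (1 - l) *: x2)).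
  by apply/rowP => i; rewrite !mxE; ring.
apply: coneD => //; last by apply: G_convex; rewrite ?l0.
by apply: coneD => //; apply: coneZ; rewrite ?subr_ge0.
Qed.

Lemma closure_cone_rec r : closure C r -> rec_cone (closure (Ya C X G)) r.
Proof.
move=> clr x clx l l0; apply/closureP => e e0.
have e20 : 0 < e / 2 by rewrite divr_gt0.
have l1 : 0 < l + 1 by rewrite ltr_wpDl.
have e30 : 0 < e / (2 * (l + 1)) by rewrite divr_gt0 // mulr_gt0.
have [y [Yy xy]] := (closureP _ _).1 clx _ e20.
have [c [Cc rc]] := (closureP _ _).1 clr _ e30.
exists (y + l *: c); split; first by apply: Ya_addC => //; apply: coneZ.
have -> : x + l *: r - (y + l *: c) = (x - y) + l *: (r - c).
  by apply/rowP => i; rewrite !mxE; ring.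
apply: le_lt_trans (ler_normD _ _) _; rewrite normrZ ger0_norm // [ltRHS]splitr.
apply: ltr_leD => //; apply: (@le_trans _ _ (l * (e / (2 * (l + 1))))).
  by apply: ler_wpM2l => //; exact: ltW.
have -> : l * (e / (2 * (l + 1))) = (l / (l + 1)) * (e / 2).
  by field; rewrite gt_eqF.
by apply: ler_piMl; [exact: ltW | rewrite ler_pdivrMr // mul1r lerDl].
Qed.

Lemma conv_proj_shift (Sb : set ('rV[R]_n * 'rV[R]_m)) a :
  Sb `<=` Sa C X G -> Defs.conv (snd @` Sb) a ->
  exists a' c', Defs.conv (G @` (fst @` Sb)) a' /\ C c' /\ a = a' + c'.
Proof.
move=> SbSa [N [w [v [w0 [w1 [Pv ->]]]]]].
have /choice [f hf] : forall i, exists s, Sb s /\ s.2 = v i.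
  by move=> i; case: (Pv i) => s Sbs <-; exists s.
have Cf i : C (v i - G (f i).1).
  have [Sbf <-] := hf i; have [_ [g [b [/= -> [Cb ->]]]]] := SbSa _ Sbf.
  by rewrite addrAC subrr add0r.
exists (\sum_i w i *: G (f i).1), (\sum_i w i *: (v i - G (f i).1)).
split; first by exists N, w, (fun i => G (f i).1); do 3!split => //;
  move=> i; exists (f i).1 => //; exists (f i) => //; case: (hf i).
split; first exact: cone_sum.
by rewrite -big_split; apply: eq_bigr => i _; apply/rowP => j; rewrite !mxE; ring.
Qed.

End ConvexProjection.

Section Correspondence.
Variables (R : realType) (n m : nat) (p : \bar R).
Variables (C : set 'rV[R]_m) (X : set 'rV[R]_n) (G : 'rV[R]_n -> 'rV[R]_m).
Hypotheses (p_ge1 : (1 <= p)%E) (coneC : convex_cone C).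
Hypotheses (X_convex : is_convex X) (G_convex : C_convex C X G).

(* Part (1), self-boundedness: if the upper image lies in q + C, then so does
   Y_a, so Y_a is covered by conv {q} + cl C and cannot be all of R^m. *)
Lemma bounded_self_bounded :
  nontrivial C -> bounded_CVOP C X G -> self_bounded C X G.
Proof.
move=> ntC [q hq].
have Yq y : Ya C X G y -> C (y - q).
  move=> Yy; have /hq [_ [b [-> [Cb ->]]]] : upper_image C X G y.
    by rewrite upper_imageE; exact: subset_closure.
  by rewrite addrAC subrr add0r.
split=> [YT|].
  apply: ntC.2; apply/seteqP; split => // w _.
  by move: (Yq (w + q)); rewrite YT addrK => /(_ I).
exists [set q]; split=> [|y Yy]; first exact: finite_set1.
exists q, (y - q); split; last split; last by rewrite addrC subrK.
  by exists 1%N, (fun=> 1), (fun=> q); rewrite !big_ord1 scale1r.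
by apply: closure_cone_rec; [exact: coneC | apply: subset_closure; exact: Yq].
Qed.

(* Part (1), approximation: a Hausdorff bound eps yields, by attainment of
   the distance, an exact eps-covering of Y_a by conv Gamma[Xb] + cl C. *)
Lemma infimizer_eps_solution eps Xb : hausdorff_infimizer p C X G eps Xb ->
  finite_eps_solution p C X G eps [set (x, G x) | x in Xb].
Proof.
move=> [[x0 Xbx0] [Xb_fin [XbX H]]].
split; first by exists (x0, G x0), x0.
split; first exact: finite_image.
split=> [_ [x Xbx <-]|y Yy].
  split => /=; first exact: XbX.
  by exists (G x), 0; split => //; split; [exact: cone0 | rewrite addr0].
have approx d : 0 < d -> exists a c,
    Defs.conv (G @` Xb) a /\ C c /\ pnorm p (y - (a + c)) < eps + d.
  move=> d0; have Uy : upper_image C X G y.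
    by rewrite upper_imageE; exact: subset_closure.
  by have [_ [a [c [Pa [Cc ->]]]] ya] := hausdorff_approx H Uy d0; exists a, c.
have C_neq0 : C !=set0 by case: coneC.
have [a [r [Pa [clr yar]]]] :=
  approx_attained p_ge1 C_neq0 (finite_image G Xb_fin) approx.
exists (a + r), (y - (a + r)); split; last by split => //; rewrite addrC subrK.
exists a, r; split.
  by apply: conv_mono Pa => _ [x Xbx <-]; exists (x, G x) => //; exists x.
by split => //; exact: closure_cone_rec.
Qed.

Lemma eps_solution_decomp eps Sb y :
  rec_cone (closure (Ya C X G)) = closure C ->
  finite_eps_solution p C X G eps Sb -> Ya C X G y ->
  exists a r b, Defs.conv (snd @` Sb) a /\ closure C r /\
    pnorm p b <= eps /\ y = a + r + b.
Proof.
move=> recE [_ [_ [_ cover]]] /cover [_ [b [[a [r [Pa [clr ->]]]] [hb ->]]]].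
by exists a, r, b; rewrite -recE.
Qed.

(* An eps-solution forces eps >= 0: S_b is nonempty, so Y_a is too. *)
Lemma eps_solution_ge0 eps Sb : finite_eps_solution p C X G eps Sb -> 0 <= eps.
Proof.
move=> [[s Sbs] [_ [SbSa cover]]].
have [_ [b [_ [hb _]]]] := cover s.2 (ex_intro2 _ _ s (SbSa s Sbs) erefl).
exact: le_trans (pnorm_ge0 p_ge1 b) hb.
Qed.

(* Part (2), boundedness: by the decomposition, every point of the upper
   image is within a fixed distance of C, and an interior point of the solid
   cone C absorbs that distance. *)
Lemma eps_solution_bounded eps Sb : solid C ->
  rec_cone (closure (Ya C X G)) = closure C ->
  finite_eps_solution p C X G eps Sb -> bounded_CVOP C X G.
Proof.
move=> [c0 /interiorP [rho rho0 ballC]] recE sol.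
have eps0 := eps_solution_ge0 sol.
have [_ [Sb_fin _]] := sol.
have [MQ MQ0 HMQ] := finite_norm_bound (finite_image snd Sb_fin).
pose M := 1 + MQ + 1 + eps; have M0 : 0 <= M by rewrite /M; lra.
exists (- (((M + 1) / rho) *: c0)) => z; rewrite upper_imageE => clz.
have [y [Yy zy]] := (closureP _ _).1 clz 1 ltr01.
have [a [r [b [Pa [clr [hb yE]]]]]] := eps_solution_decomp recE sol Yy.
have [c [Cc rc]] := (closureP _ _).1 clr 1 ltr01.
exists (- (((M + 1) / rho) *: c0)), (z + ((M + 1) / rho) *: c0).
split => //; split; last by rewrite addrC addrK.
apply: (cone_absorbs coneC rho0 ballC M0 Cc).
have -> : z - c = (z - y) + a + (r - c) + b.
  by rewrite yE; apply/rowP => j; rewrite !mxE; ring.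
have Ma : `|a| <= MQ by apply: (conv_norm_le _ Pa) => x [s Sbs <-]; apply: HMQ; exists s.
have Mb : `|b| <= eps := le_trans (norm_le_pnorm p_ge1 b) hb.
apply: le_trans (ler_normD _ _) _; rewrite /M; apply: lerD => //.
apply: le_trans (ler_normD _ _) _; apply: lerD; last exact: ltW.
by apply: le_trans (ler_normD _ _) _; apply: lerD => //; exact: ltW.
Qed.

(* Part (2), Hausdorff bound: points of the upper image are within
   eps + (xi - eps) of conv Gamma[proj_x Sb] + C by the decomposition, and
   conversely conv Gamma[proj_x Sb] + C lies inside Y_a by convexity. *)
Lemma eps_solution_infimizer eps Sb xi :
  rec_cone (closure (Ya C X G)) = closure C ->
  finite_eps_solution p C X G eps Sb -> eps < xi ->
  hausdorff_infimizer p C X G xi (fst @` Sb).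
Proof.
move=> recE sol exi; have := sol => -[[s0 Sbs0] [Sb_fin [SbSa _]]].
split; first by exists s0.1, s0.
split; first exact: finite_image.
split; first by move=> _ [s Sbs <-]; case: (SbSa _ Sbs).
apply: hausdorff_le => [a1|_ [a [c [Pa [Cc ->]]]]]; last first.
  exists (a + c); last by rewrite subrr pnorm0 // ltW // (le_lt_trans (eps_solution_ge0 sol)).
  rewrite upper_imageE; apply/subset_closure/Ya_addC => //.
  apply: (conv_sub (Ya_convex coneC X_convex G_convex)); apply: conv_mono Pa => _ [x [s Sbs <-] <-].
  by apply: Ya_image; case: (SbSa _ Sbs).
rewrite upper_imageE => cla1.
pose d := xi - eps; have d0 : 0 < d by rewrite subr_gt0.
pose e1 := d / (2 * (m%:R + 1)).
have m1 : 0 < m%:R + 1 :> R by rewrite ltr_wpDl.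
have e10 : 0 < e1 by rewrite divr_gt0 // mulr_gt0.
have small (v : 'rV[R]_m) : `|v| < e1 -> pnorm p v <= d / 2.
  move=> hv; apply: le_trans (pnorm_le_norm p_ge1 _) _.
  apply: (@le_trans _ _ (m%:R * e1)); first by apply: ler_wpM2l => //; exact: ltW.
  have -> : m%:R * e1 = (m%:R / (m%:R + 1)) * (d / 2) by rewrite /e1; field; rewrite gt_eqF.
  apply: ler_piMl; first by rewrite divr_ge0 // ltW.
  by rewrite ler_pdivrMr // mul1r lerDl.
have [y [Yy a1y]] := (closureP _ _).1 cla1 e1 e10.
have [a [r [b [Pa [clr [hb yE]]]]]] := eps_solution_decomp recE sol Yy.
have [c [Cc rc]] := (closureP _ _).1 clr e1 e10.
have [a' [c' [Pa' [Cc' aE]]]] := conv_proj_shift coneC SbSa Pa.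
exists (a' + (c' + c)); first by exists a', (c' + c); do 2!split => //; exact: coneD.
have -> : a1 - (a' + (c' + c)) = (a1 - y) + b + (r - c).
  by rewrite yE aE; apply/rowP => j; rewrite !mxE; ring.
apply: le_trans (pnormD p_ge1 _ _) _.
apply: (@le_trans _ _ (d / 2 + eps + d / 2)); last by rewrite /d; lra.
apply: lerD; last exact: small.
by apply: le_trans (pnormD p_ge1 _ _) _; apply: lerD => //; exact: small.
Qed.

End Correspondence.

Unset Implicit Arguments.
Set Strict Implicit.

Theorem mainTheorem19 (R : realType) (n m : nat) (p : \bar R)
  (C : set 'rV[R]_m) (X : set 'rV[R]_n) (G : 'rV[R]_n -> 'rV[R]_m) :
  (1 <= p)%E ->
  convex_cone C -> pointed C -> solid C -> nontrivial C ->
  is_convex X -> C_convex C X G ->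
  (* (1) *)
  (forall (eps : R) (Xb : set 'rV[R]_n), 0 < eps ->
     bounded_CVOP C X G ->
     hausdorff_infimizer p C X G eps Xb ->
     self_bounded C X G /\
     finite_eps_solution p C X G eps [set (x, G x) | x in Xb]) /\
  (* (2) *)
  (forall (eps : R) (Sb : set ('rV[R]_n * 'rV[R]_m)), 0 < eps ->
     self_bounded C X G ->
     rec_cone (closure (Ya C X G)) = closure C ->
     finite_eps_solution p C X G eps Sb ->
     forall xi : R, eps < xi ->
       bounded_CVOP C X G /\ hausdorff_infimizer p C X G xi (fst @` Sb)).
Proof.
move=> p_ge1 coneC _ solidC ntC X_convex G_convex; split.
- move=> eps Xb _ bdd infimizer; split.
  + exact: bounded_self_bounded coneC ntC bdd.
  + exact (infimizer_eps_solution p_ge1 coneC infimizer).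
- move=> eps Sb _ _ recE sol xi exi; split.
  + exact (eps_solution_bounded p_ge1 coneC solidC recE sol).
  + exact (eps_solution_infimizer p_ge1 coneC X_convex G_convex recE sol exi).
Qed.
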